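(* Let $T\ge 2$, let $\mathcal D_1,\dots,\mathcal D_T$ be task distributions, let $f_1,\dots,f_T$ be arbitrary encoders, let $\lambda>0$, and for each $t\in\{2,\dots,T\}$ let $k_{t1},\dots,k_{t,t-1}>0$ with $\sum_{j=1}^{t-1}k_{tj}=1$. Set $\alpha=\frac{2e^2}{1+e^2}$, $\gamma_t(\lambda)=\min\big(\{\tfrac1t\}\cup\{\lambda k_{tj}\}_{j=1}^{t-1}\big)$ and $\gamma'_t(\lambda)=\max\big(\{1\}\cup\{\lambda k_{tj}\}_{j=1}^{t-1}\big)$. Then $$L_{\mathrm{test}}(f_T;\mathcal D_1,\dots,\mathcal D_T)\le \alpha^{T-1}L_{\mathrm{train}}(f_1;\mathcal D_1)+\sum_{t=2}^T\frac{\alpha^{T-t}}{\gamma_t(\lambda)}L_{\mathrm{train}}(f_t;f_{t-1},\mathcal D_t,\mathcal D_{1:t-1})+\eta,$$ $$L_{\mathrm{test}}(f_T;\mathcal D_1,\dots,\mathcal D_T)\ge \alpha^{T-1}L_{\mathrm{train}}(f_1;\mathcal D_1)+\sum_{t=2}^T\frac{\alpha^{T-t}}{\gamma'_t(\lambda)}L_{\mathrm{train}}(f_t;f_{t-1},\mathcal D_t,\mathcal D_{1:t-1})+\eta',$$ where $$\eta=\Big(2-\alpha+\alpha\log\tfrac{\alpha}{2}\Big)\frac{T-1-T\alpha+\alpha^T}{(1-\alpha)^2}+\sum_{t=2}^T\alpha^{T-t}\Big(1-\frac{1}{\gamma_t(\lambda)}\Big)\inf_f L_{\mathrm{con}}(f;\mathcal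 D_t),$$ $$\eta'=-\big(\alpha\log(1+e^2)+\alpha\big)\frac{T-1-T\alpha+\alpha^T}{(1-\alpha)^2},$$ the infimum being over all encoders $f$.
   Context: Let $\mathcal X$ be a measurable input space and $d\ge 1$. An encoder is a measurable map $f:\mathcal X\to\mathbb R^d$ with $\|f(x)\|_2=1$ for all $x$. A task distribution $\mathcal D$ consists of a probability distribution $\mu$ on a countable set of classes together with, for each class $c$, a probability distribution $\mathcal D_c$ on $\mathcal X$. Sampling scheme: $c^+\sim\mu$ and $c^-\sim\mu$ independently; given $c^+$, $x,x^+$ are drawn i.i.d. from $\mathcal D_{c^+}$; given $c^-$, $x^-\sim\mathcal D_{c^-}$ independently. Let $\ell(v)=\log(1+e^{-v})$. The contrastive loss is $L_{\mathrm{con}}(f;\mathcal D)=\mathbb E\big[\ell\big(f(x)^\top(f(x^+)-f(x^-))\big)\big]$. For an encoder $f$ let $\mathbf p(f;x,x^+,x^-)=\mathrm{softmax}\big(f(x)^\top f(x^+),\,f(x)^\top f(x^-)\big)\in\mathbb R^2$. For encoders $g,h$ the distillation loss is $L_{\mathrm{dis}}(g;h,\mathcal D)=\mathbb E\big[-\mathbf p(h;x,x^+,x^-)\cdot\log\mathbf p(g;x,x^+,x^-)\big]$ (logarithm taken componentwise), with the same sampling scheme. For $t\ge2$, the distillation loss on previously seen tasks is $L_{\mathrm{dis}}(f_t;f_{t-1},\mathcal D_{1:t-1}):=\sum_{j=1}^{t-1}k_{tj}\,L_{\mathrm{dis}}(f_t;f_{t-1},\mathcal D_j)$. Training losses: $L_{\mathrm{train}}(f_1;\mathcal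 D_1)=L_{\mathrm{con}}(f_1;\mathcal D_1)$ and, for $t\ge 2$, $L_{\mathrm{train}}(f_t;f_{t-1},\mathcal D_t,\mathcal D_{1:t-1})=L_{\mathrm{con}}(f_t;\mathcal D_t)+\lambda\,L_{\mathrm{dis}}(f_t;f_{t-1},\mathcal D_{1:t-1})$. Test loss: $L_{\mathrm{test}}(f_T;\mathcal D_1,\dots,\mathcal D_T)=\sum_{t=1}^T L_{\mathrm{con}}(f_T;\mathcal D_t)$. *)

From HB Require Import structures.
From mathcomp Require Import all_boot all_order all_algebra.
From mathcomp Require Import all_classical all_reals all_analysis.
Set Implicit Arguments. Unset Strict Implicit. Unset Printing Implicit Defensive.
Import Order.TTheory GRing.Theory Num.Theory.
Import numFieldNormedType.Exports.
Local Open Scope classical_set_scope.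
Local Open Scope ring_scope.

Section Defs.
Context (d : measure_display) (X : measurableType d) (R : realType) (dim : nat).

Definition dotp (u v : 'rV[R]_dim) : R := \sum_(i < dim) u ord0 i * v ord0 i.

Definition is_encoder (f : X -> 'rV[R]_dim) : Prop :=
  (forall i : 'I_dim, measurable_fun setT (fun x => f x ord0 i)) /\
  (forall x, Num.sqrt (dotp (f x) (f x)) = 1).

Record taskdist := TaskDist {
  cls_mu : nat -> R;
  cls_mu_ge0 : forall c, 0 <= cls_mu c;
  cls_mu_sum1 : (fun n => \sum_(0 <= c < n) cls_mu c) @ \oo --> (1 : R);
  cls_D : nat -> probability X R }.

(* Expectation of g(x, x+, x-) under the sampling scheme:
   c+, c- ~ mu iid; x, x+ ~ D_{c+} iid; x- ~ D_{c-}. *)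
Definition Esample (D : taskdist) (g : X -> X -> X -> R) : R :=
  limn (fun n => \sum_(0 <= cp < n)
    limn (fun m => \sum_(0 <= cn < m)
      cls_mu D cp * cls_mu D cn *
      (\int[cls_D D cp]_x \int[cls_D D cp]_xp \int[cls_D D cn]_xn g x xp xn))).

Definition ell (v : R) : R := ln (1 + expR (- v)).

Definition Lcon (f : X -> 'rV[R]_dim) (D : taskdist) : R :=
  Esample D (fun x xp xn => ell (dotp (f x) (f xp) - dotp (f x) (f xn))).

Definition softmax1 (a b : R) : R := expR a / (expR a + expR b).
Definition softmax2 (a b : R) : R := expR b / (expR a + expR b).

Definition Ldis (g h : X -> 'rV[R]_dim) (D : taskdist) : R :=
  Esample D (fun x xp xn =>
    let ag := dotp (g x) (g xp) in let bg := dotp (g x) (g xn) in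
    let ah := dotp (h x) (h xp) in let bh := dotp (h x) (h xn) in
    - (softmax1 ah bh * ln (softmax1 ag bg) + softmax2 ah bh * ln (softmax2 ag bg))).

Definition Ldis_prev (k : nat -> nat -> R) (t : nat) (ft ftm1 : X -> 'rV[R]_dim)
  (D : nat -> taskdist) : R :=
  \sum_(1 <= j < t) k t j * Ldis ft ftm1 (D j).

Definition Ltrain1 (f1 : X -> 'rV[R]_dim) (D1 : taskdist) : R := Lcon f1 D1.

Definition Ltrain (lam : R) (k : nat -> nat -> R) (t : nat) (ft ftm1 : X -> 'rV[R]_dim)
  (Dt : taskdist) (D : nat -> taskdist) : R :=
  Lcon ft Dt + lam * Ldis_prev k t ft ftm1 D.

Definition Ltest (T : nat) (fT : X -> 'rV[R]_dim) (D : nat -> taskdist) : R :=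
  \sum_(1 <= t < T.+1) Lcon fT (D t).

Definition inf_Lcon (D : taskdist) : R :=
  inf [set Lcon f D | f in [set f | is_encoder f]].

End Defs.

Section Consts.
Context (R : realType).
Definition alpha : R := 2 * expR 2 / (1 + expR 2).

Definition gammat (lam : R) (k : nat -> nat -> R) (t : nat) : R :=
  \big[Num.min/(t%:R)^-1]_(1 <= j < t) (lam * k t j).
Definition gammat' (lam : R) (k : nat -> nat -> R) (t : nat) : R :=
  \big[Num.max/1]_(1 <= j < t) (lam * k t j).

Definition geomfac (T : nat) : R :=
  (T%:R - 1 - T%:R * alpha + alpha ^+ T) / (1 - alpha) ^+ 2.
End Consts.

From HB Require Import structures.
From mathcomp Require Import all_boot all_order all_algebra.
From mathcomp Require Import all_classical all_reals all_analysis.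
From mathcomp Require Import measurable_realfun.
From mathcomp Require Import ring lra.
Import Order.TTheory GRing.Theory Num.Theory.
Import numFieldNormedType.Exports.
Local Open Scope classical_set_scope.
Local Open Scope ring_scope.

(* Write m_f = f(x)·(f(x⁺) − f(x⁻)) ∈ [−2, 2] for the margin of a unit-norm encoder f and
   σ for the logistic function. The distillation loss of g against the teacher h is the
   expectation of ell(m_g) + σ(−m_h) m_g, so pointwise, for every a > 0,
     ell(m_g) <= a ell(m_h) + [ell(m_g) + σ(−m_h) m_g] + (2 − a + a ln(a/2)),
   while for a = α = 2σ(2), since σ(−m_h) <= σ(2) and ell(m_h) <= ell(−2),
     ell(m_g) >= α ell(m_h) + [ell(m_g) + σ(−m_h) m_g] − (α ln(1 + e²) + α).
   Taking expectations and summing over the tasks j < t compares L_test(f_t) with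
   α L_test(f_{t−1}) plus the training loss of f_t scaled by 1/γ_t (resp. 1/γ'_t), up to
   (t − 1) times the constant and, for the upper bound, the gap of L_con(f_t; D_t) to its
   infimum. Unrolling this linear recursion down to t = 1 gives both bounds, where
   Σ_{t=2}^T α^{T−t} (t − 1) = (T − 1 − Tα + α^T)/(1 − α)². *)

Section bounded_measurable.
Context {R : realType}.

Definition bounded_measurable {d} {T : measurableType d} (h : T -> R) :=
  measurable_fun setT h /\ exists M, forall x, `|h x| <= M.

Context {d : measure_display} {T : measurableType d}.
Implicit Types h : T -> R.

Lemma bounded_measurable_cst (c : R) : bounded_measurable (fun _ : T => c).
Proof. by split; [exact: measurable_cst | exists `|c|]. Qed.

Lemma bounded_measurableD {h1 h2} : bounded_measurable h1 -> bounded_measurable h2 ->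
  bounded_measurable (fun x => h1 x + h2 x).
Proof.
move=> [m1 [M1 b1]] [m2 [M2 b2]]; split; first exact: measurable_funD.
by exists (M1 + M2) => x; rewrite (le_trans (ler_normD _ _)) ?lerD.
Qed.

Lemma bounded_measurableM {h1 h2} : bounded_measurable h1 -> bounded_measurable h2 ->
  bounded_measurable (fun x => h1 x * h2 x).
Proof.
move=> [m1 [M1 b1]] [m2 [M2 b2]]; split; first exact: measurable_funM.
exists (M1 * M2) => x; rewrite normrM ler_pM //.
Qed.

Lemma bounded_measurableZ (a : R) {h} : bounded_measurable h ->
  bounded_measurable (fun x => a * h x).
Proof. exact: bounded_measurableM (bounded_measurable_cst a). Qed.

Lemma bounded_measurable_comp {d'} {T' : measurableType d'} (phi : T' -> T) {h} :
  measurable_fun setT phi -> bounded_measurable h -> bounded_measurable (h \o phi).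
Proof.
move=> mphi [mh [M hM]]; split; first exact: measurableT_comp.
by exists M => x; exact: hM.
Qed.

End bounded_measurable.

Section probability_Rintegral.
Context {d : measure_display} {T : measurableType d} {R : realType}.
Variable P : probability T R.
Implicit Types h : T -> R.

Lemma bounded_measurable_integrable {h} : bounded_measurable h ->
  P.-integrable setT (EFin \o h).
Proof.
move=> [mh [M hM]]; apply: measurable_bounded_integrable => //.
  exact: le_lt_trans (probability_le1 P measurableT) (ltry 1).
rewrite /bounded_near; near=> M' => x _ /=; apply: le_trans (hM x) _.
by near: M'; apply: nbhs_pinfty_ge; exact: num_real.
Unshelve. all: by end_near. Qed.

Lemma Rintegral_prob_cst (c : R) : \int[P]_x c = c.
Proof.
rewrite Rintegral_cst //.
have -> : fine (P setT) = 1 by rewrite probability_setT.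
by rewrite mulr1.
Qed.

Lemma RintegralD_bounded {h1 h2} : bounded_measurable h1 -> bounded_measurable h2 ->
  \int[P]_x (h1 x + h2 x) = \int[P]_x h1 x + \int[P]_x h2 x.
Proof.
by move=> b1 b2; apply: RintegralD => //; exact: bounded_measurable_integrable.
Qed.

Lemma RintegralZl_bounded (a : R) {h} : bounded_measurable h ->
  \int[P]_x (a * h x) = a * \int[P]_x h x.
Proof.
by move=> b; apply: RintegralZl => //; exact: bounded_measurable_integrable.
Qed.

Lemma le_Rintegral_bounded {h1 h2} : bounded_measurable h1 -> bounded_measurable h2 ->
  (forall x, h1 x <= h2 x) -> \int[P]_x h1 x <= \int[P]_x h2 x.
Proof.
by move=> b1 b2 h12; apply: le_Rintegral => //; exact: bounded_measurable_integrable.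
Qed.

Lemma normr_Rintegral_le {h} (M : R) : measurable_fun setT h ->
  (forall x, `|h x| <= M) -> `|\int[P]_x h x| <= M.
Proof.
move=> mh hM; have bh : bounded_measurable h by split; last exists M.
apply: le_trans (le_normr_Rintegral measurableT (bounded_measurable_integrable bh)) _.
rewrite -[leRHS]Rintegral_prob_cst; apply: le_Rintegral_bounded => //.
  by split; [exact: measurableT_comp | exists M => x; rewrite normr_id].
exact: bounded_measurable_cst.
Qed.

End probability_Rintegral.

Section Rintegral_snd.
Context {d1 d2 : measure_display} {T1 : measurableType d1} {T2 : measurableType d2}.
Context {R : realType} (P : probability T2 R).

Lemma measurable_Rintegral_snd (h : T1 * T2 -> R) : measurable_fun setT h ->
  measurable_fun setT (fun x => \int[P]_y h (x, y)).
Proof.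
move=> mh; rewrite /Rintegral.
have mF : measurable_fun setT (fubini_F P (EFin \o h)).
  have -> : fubini_F P (EFin \o h) = (fun x =>
      \int[P]_y ((EFin \o h)^\+ (x, y)) - \int[P]_y ((EFin \o h)^\- (x, y)))%E.
    apply/funext => x; rewrite /fubini_F.
    have -> : (fun y => (EFin \o h) (x, y)) = (EFin \o h) \o pair x by [].
    by rewrite integralE funepos_comp funeneg_comp.
  apply: emeasurable_funB; apply: measurable_fun_fubini_tonelli_F.
  - exact/measurable_funepos/measurable_EFinP.
  - by move=> z; exact: funepos_ge0.
  - exact/measurable_funeneg/measurable_EFinP.
  - by move=> z; exact: funeneg_ge0.
exact: measurableT_comp mF.
Qed.

Lemma bounded_measurable_Rintegral_snd {h : T1 * T2 -> R} : bounded_measurable h ->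
  bounded_measurable (fun x => \int[P]_y h (x, y)).
Proof.
move=> [mh [M hM]]; split; first exact: measurable_Rintegral_snd.
exists M => x; apply: normr_Rintegral_le => [|y]; last exact: hM.
exact: measurableT_comp mh (pair1_measurable x).
Qed.

End Rintegral_snd.

Section iterated_integral.
Context {d : measure_display} {X : measurableType d} {R : realType}.
Implicit Types g : X -> X -> X -> R.

Definition bounded_measurable3 g :=
  bounded_measurable (fun w : X * X * X => g w.1.1 w.1.2 w.2).

Variables p n : probability X R.

Definition iint3 g : R := \int[p]_x \int[p]_xp \int[n]_xn g x xp xn.

Lemma bounded_measurable3_partial {g} : bounded_measurable3 g ->
  [/\ forall x xp, bounded_measurable (fun xn => g x xp xn),
      forall x, bounded_measurable (fun xp => \int[n]_xn g x xp xn) &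
      bounded_measurable (fun x => \int[p]_xp \int[n]_xn g x xp xn)].
Proof.
move=> bg.
have bg2 : bounded_measurable (fun w : X * X => \int[n]_xn g w.1 w.2 xn).
  exact: bounded_measurable_Rintegral_snd bg.
split.
- by move=> x xp; exact: bounded_measurable_comp (pair1_measurable (x, xp)) bg.
- by move=> x; exact: bounded_measurable_comp (pair1_measurable x) bg2.
- exact: bounded_measurable_Rintegral_snd bg2.
Qed.

Lemma iint3D {g1 g2} : bounded_measurable3 g1 -> bounded_measurable3 g2 ->
  iint3 (fun x xp xn => g1 x xp xn + g2 x xp xn) = iint3 g1 + iint3 g2.
Proof.
move=> /bounded_measurable3_partial[b11 b12 b13] /bounded_measurable3_partial[b21 b22 b23].
rewrite /iint3 -(RintegralD_bounded p b13 b23); apply: eq_Rintegral => x _.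
rewrite -(RintegralD_bounded p (b12 x) (b22 x)); apply: eq_Rintegral => xp _.
exact: RintegralD_bounded.
Qed.

Lemma iint3Z (a : R) {g} : bounded_measurable3 g ->
  iint3 (fun x xp xn => a * g x xp xn) = a * iint3 g.
Proof.
move=> /bounded_measurable3_partial[b1 b2 b3].
rewrite /iint3 -(RintegralZl_bounded p a b3); apply: eq_Rintegral => x _.
rewrite -(RintegralZl_bounded p a (b2 x)); apply: eq_Rintegral => xp _.
exact: RintegralZl_bounded.
Qed.

Lemma iint3_cst (c : R) : iint3 (fun _ _ _ => c) = c.
Proof. by rewrite /iint3 !Rintegral_prob_cst. Qed.

Lemma le_iint3 {g1 g2} : bounded_measurable3 g1 -> bounded_measurable3 g2 ->
  (forall x xp xn, g1 x xp xn <= g2 x xp xn) -> iint3 g1 <= iint3 g2.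
Proof.
move=> /bounded_measurable3_partial[b11 b12 b13] /bounded_measurable3_partial[b21 b22 b23] g12.
apply: le_Rintegral_bounded b13 b23 _ => x.
apply: le_Rintegral_bounded (b12 x) (b22 x) _ => xp.
exact: le_Rintegral_bounded (b11 x xp) (b21 x xp) _.
Qed.

Lemma normr_iint3_le {g} (M : R) : bounded_measurable3 g ->
  (forall x xp xn, `|g x xp xn| <= M) -> `|iint3 g| <= M.
Proof.
move=> /bounded_measurable3_partial[b1 b2 [b3 _]] gM.
apply: normr_Rintegral_le b3 _ => x; apply: normr_Rintegral_le (b2 x).1 _ => xp.
exact: normr_Rintegral_le (b1 x xp).1 _.
Qed.

End iterated_integral.

Section weighted_series.
Context {R : realType} (mu : nat -> R).
Hypotheses (mu_ge0 : forall c, 0 <= mu c)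
  (mu_sum1 : (fun N => \sum_(0 <= c < N) mu c) @ \oo --> (1 : R)).

Definition wseries (u : nat -> R) : R := limn (series (fun c => mu c * u c)).

Lemma is_cvg_wseries {u} {M : R} : (forall c, `|u c| <= M) ->
  cvgn (series (fun c => mu c * u c)).
Proof.
move=> uM; have M0 : 0 <= M := le_trans (normr_ge0 _) (uM 0%N).
apply: normed_cvg; apply: (@series_le_cvg _ _ (fun c => M * mu c)) => [c|c|c|].
- exact: normr_ge0.
- exact: mulr_ge0.
- by rewrite /= normrM ger0_norm // mulrC ler_wpM2r.
exact: (@is_cvg_seriesZ _ mu M (cvgP _ mu_sum1)).
Qed.

Lemma wseriesD {u v} {Mu Mv : R} : (forall c, `|u c| <= Mu) -> (forall c, `|v c| <= Mv) ->
  wseries (fun c => u c + v c) = wseries u + wseries v.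
Proof.
move=> uM vM; rewrite /wseries -lim_seriesD; last 2 first.
- exact: is_cvg_wseries uM.
- exact: is_cvg_wseries vM.
by congr (limn (series _)); apply/funext => c; rewrite mulrDr.
Qed.

Lemma wseriesZ (a : R) {u} {M : R} : (forall c, `|u c| <= M) ->
  wseries (fun c => a * u c) = a * wseries u.
Proof.
move=> uM; rewrite /wseries -[RHS]/(a *: _) -lim_seriesZ; last exact: is_cvg_wseries uM.
by congr (limn (series _)); apply/funext => c; rewrite /= mulrCA.
Qed.

Lemma wseries_cst (c0 : R) : wseries (fun _ => c0) = c0.
Proof.
rewrite /wseries (_ : (fun c => mu c * c0) = c0 *: mu); last first.
  by apply/funext => c; rewrite mulrC.
rewrite lim_seriesZ; last exact: cvgP _ mu_sum1.
by rewrite (cvg_lim _ mu_sum1) // [_ *: _]mulr1.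
Qed.

Lemma ler_wseries {u v} {Mu Mv : R} : (forall c, `|u c| <= Mu) -> (forall c, `|v c| <= Mv) ->
  (forall c, u c <= v c) -> wseries u <= wseries v.
Proof.
move=> uM vM uv; apply: lim_series_le => [||c]; last exact: ler_wpM2l.
- exact: is_cvg_wseries uM.
- exact: is_cvg_wseries vM.
Qed.

Lemma normr_wseries_le {u} (M : R) : (forall c, `|u c| <= M) -> `|wseries u| <= M.
Proof.
move=> uM; have cstM (c0 : R) (c : nat) : `|(fun=> c0) c| <= `|c0| by [].
rewrite ler_norml -[X in X <= _ <= _](wseries_cst (- M)) -[X in _ <= _ <= X](wseries_cst M).
apply/andP; split.
- by apply: (ler_wseries (cstM _) uM) => c; move: (uM c); rewrite ler_norml => /andP[].
- by apply: (ler_wseries uM (cstM _)) => c; move: (uM c); rewrite ler_norml => /andP[].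
Qed.

End weighted_series.

Section Esample.
Context {d : measure_display} {X : measurableType d} {R : realType} (D : taskdist X R).
Implicit Types g : X -> X -> X -> R.

Let mu_ge0 := cls_mu_ge0 D.
Let mu_sum1 := cls_mu_sum1 D.
Let A g cp cn := iint3 (cls_D D cp) (cls_D D cn) g.

Lemma bounded_measurable3_iint3 {g} : bounded_measurable3 g ->
  exists M, (forall cp cn, `|A g cp cn| <= M) /\ forall cp, `|wseries (cls_mu D) (A g cp)| <= M.
Proof.
move=> bg; have [_ [M gM]] := bg.
have AM cp cn : `|A g cp cn| <= M.
  by apply: normr_iint3_le => // x xp xn; exact: (gM (x, xp, xn)).
by exists M; split=> // cp; exact: (normr_wseries_le _ mu_ge0 mu_sum1 _ (AM cp)).
Qed.

Lemma EsampleE {g} : bounded_measurable3 g ->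
  Esample D g = wseries (cls_mu D) (fun cp => wseries (cls_mu D) (A g cp)).
Proof.
move=> /bounded_measurable3_iint3[M [AM _]].
rewrite /Esample /wseries; congr (limn _); apply/funext => N.
apply: eq_bigr => cp _; rewrite -[RHS]/(cls_mu D cp *: _) -limZl_tmp.
  congr (limn _); apply/funext => m; rewrite -[RHS]/(cls_mu D cp * series _ m).
  by rewrite /series /= mulr_sumr; apply: eq_bigr => cn _; rewrite mulrA.
exact: (is_cvg_wseries (cls_mu D) mu_ge0 mu_sum1 (AM cp)).
Qed.

Lemma EsampleD {g1 g2} : bounded_measurable3 g1 -> bounded_measurable3 g2 ->
  Esample D (fun x xp xn => g1 x xp xn + g2 x xp xn) = Esample D g1 + Esample D g2.
Proof.
move=> b1 b2; rewrite !EsampleE //; last exact: bounded_measurableD.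
have [M1 [A1 W1]] := bounded_measurable3_iint3 b1.
have [M2 [A2 W2]] := bounded_measurable3_iint3 b2.
rewrite -(wseriesD (cls_mu D) mu_ge0 mu_sum1 W1 W2); congr wseries; apply/funext => cp.
rewrite -(wseriesD (cls_mu D) mu_ge0 mu_sum1 (A1 cp) (A2 cp)); congr wseries.
by apply/funext => cn; exact: iint3D.
Qed.

Lemma EsampleZ (a : R) {g} : bounded_measurable3 g ->
  Esample D (fun x xp xn => a * g x xp xn) = a * Esample D g.
Proof.
move=> b; rewrite !EsampleE //; last exact: bounded_measurableZ.
have [M [AM WM]] := bounded_measurable3_iint3 b.
rewrite -(wseriesZ (cls_mu D) mu_ge0 mu_sum1 a WM); congr wseries; apply/funext => cp.
rewrite -(wseriesZ (cls_mu D) mu_ge0 mu_sum1 a (AM cp)); congr wseries.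
by apply/funext => cn; exact: iint3Z.
Qed.

Lemma Esample_cst (c : R) : Esample D (fun _ _ _ => c) = c.
Proof.
rewrite EsampleE; last exact: bounded_measurable_cst.
have Ac cp : A (fun _ _ _ => c) cp = fun=> c by apply/funext => cn; exact: iint3_cst.
under eq_fun do rewrite Ac.
by rewrite (wseries_cst _ mu_sum1) (wseries_cst _ mu_sum1).
Qed.

Lemma ler_Esample {g1 g2} : bounded_measurable3 g1 -> bounded_measurable3 g2 ->
  (forall x xp xn, g1 x xp xn <= g2 x xp xn) -> Esample D g1 <= Esample D g2.
Proof.
move=> b1 b2 g12; rewrite (EsampleE b1) (EsampleE b2).
have [M1 [A1 W1]] := bounded_measurable3_iint3 b1.
have [M2 [A2 W2]] := bounded_measurable3_iint3 b2.
apply: (ler_wseries _ mu_ge0 mu_sum1 W1 W2) => cp.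
apply: (ler_wseries _ mu_ge0 mu_sum1 (A1 cp) (A2 cp)) => cn.
exact: (le_iint3 _ _ b1 b2 g12).
Qed.

End Esample.

Section logistic.
Context {R : realType}.
Implicit Types u v w : R.

Definition sigmoid v : R := (1 + expR (- v))^-1.

Lemma add1expR_gt0 v : 0 < 1 + expR v :> R.
Proof. by rewrite addr_gt0 ?expR_gt0. Qed.

Lemma sigmoid_gt0 v : 0 < sigmoid v.
Proof. by rewrite invr_gt0 add1expR_gt0. Qed.

Lemma sigmoid_le1 v : sigmoid v <= 1.
Proof. by rewrite invf_le1 ?add1expR_gt0 // lerDl expR_ge0. Qed.

Lemma ler_sigmoid {u v} : u <= v -> sigmoid u <= sigmoid v.
Proof. by move=> uv; rewrite lef_pV2 ?posrE ?add1expR_gt0 // lerD2l ler_expR lerN2. Qed.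

Lemma sigmoidN v : sigmoid (- v) = 1 - sigmoid v.
Proof.
rewrite /sigmoid opprK expRN; have := expR_gt0 v; have := add1expR_gt0 v.
by move=> ? ?; field; rewrite addrC !gt_eqF.
Qed.

Lemma ln_sigmoid v : ln (sigmoid v) = - ell v.
Proof. by rewrite /ell /sigmoid lnV ?posrE ?add1expR_gt0. Qed.

Lemma ellN v : ell (- v) = v + ell v.
Proof.
rewrite /ell opprK.
have -> : 1 + expR v = expR v * (1 + expR (- v)).
  by rewrite mulrDr mulr1 -expRD subrr expR0 addrC.
by rewrite lnM ?posrE ?expR_gt0 ?add1expR_gt0 // expRK.
Qed.

Lemma ell_ge0 v : 0 <= ell v.
Proof. by rewrite ln_ge0 // lerDl expR_ge0. Qed.

Lemma ler_ell {u v} : u <= v -> ell v <= ell u.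
Proof. by move=> uv; rewrite ler_ln ?posrE ?add1expR_gt0 // lerD2l ler_expR lerN2. Qed.

Lemma softmax1E a b : softmax1 a b = sigmoid (a - b).
Proof.
rewrite /softmax1 /sigmoid opprB expRD expRN; have := expR_gt0 a; have := expR_gt0 b.
by move=> ? ?; field; rewrite !gt_eqF // addr_gt0.
Qed.

Lemma softmax2E a b : softmax2 a b = sigmoid (b - a).
Proof.
rewrite /softmax2 /sigmoid opprB expRD expRN; have := expR_gt0 a; have := expR_gt0 b.
by move=> ? ?; field; rewrite !gt_eqF // addr_gt0.
Qed.

Lemma softmax_cross_entropy a b c e :
  - (softmax1 c e * ln (softmax1 a b) + softmax2 c e * ln (softmax2 a b)) =
  ell (a - b) + sigmoid (e - c) * (a - b).
Proof.
rewrite !softmax1E !softmax2E !ln_sigmoid -[b - a]opprB ellN -[c - e]opprB sigmoidN.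
ring.
Qed.

Lemma ell_dis_ge0 s v : 0 <= s <= 1 -> 0 <= ell v + s * v.
Proof.
move=> /andP[s0 s1]; have -> : ell v + s * v = (1 - s) * ell v + s * ell (- v).
  by rewrite ellN; ring.
by rewrite addr_ge0 // mulr_ge0 ?ell_ge0 // subr_ge0.
Qed.

Lemma measurable_ell : measurable_fun setT (@ell R).
Proof.
apply: measurableT_comp (@measurable_ln R) _; apply: measurable_funD => //.
exact: measurableT_comp (@measurable_expR R) _.
Qed.

Lemma measurable_sigmoid : measurable_fun setT sigmoid.
Proof.
have -> : sigmoid = expR \o -%R \o @ell R.
  by apply/funext => v /=; rewrite -ln_sigmoid lnK // posrE sigmoid_gt0.
by apply: measurableT_comp measurable_ell; exact: measurableT_comp.
Qed.

End logistic.

Section pointwise_bounds.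
Context {R : realType}.

Lemma alphaE : alpha R = 2 * sigmoid 2.
Proof.
rewrite /alpha /sigmoid expRN; have := expR_gt0 (2 : R).
by move=> ?; field; rewrite addrC !gt_eqF // addr_gt0.
Qed.

Lemma alpha_gt1 : 1 < alpha R.
Proof.
rewrite /alpha ltr_pdivlMr ?add1expR_gt0 // mul1r.
have : 1 < expR (2 : R) by rewrite expR_gt1.
lra.
Qed.

(* The gap [ln y <= y - 1] at [y = 2 sigmoid u / a] is what produces the constant. *)
Lemma ell_dis_upper (a u w : R) : 0 < a -> -2 <= w ->
  0 <= a * ell u + sigmoid (- u) * w + (2 - a + a * ln (a / 2)).
Proof.
move=> a0 w2; set q := sigmoid u; have q0 : 0 < q := sigmoid_gt0 u.
set y := 2 * q / a; have y0 : 0 < y by rewrite divr_gt0 // mulr_gt0.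
have lny : a * ln y <= 2 * q - a.
  have := @le_ln1Dx R (y - 1) ltac:(lra); rewrite addrC subrK => ?.
  have -> : 2 * q - a = a * (y - 1) by rewrite /y; field; rewrite gt_eqF.
  by rewrite ler_wpM2l // ltW.
have lna : a * ln (a / 2) = a * ln q - a * ln y.
  have {1}-> : q = a / 2 * y by rewrite /y; field; rewrite gt_eqF.
  rewrite [ln (_ * y)]lnM; first ring.
  - by rewrite posrE divr_gt0.
  - by rewrite posrE.
have ellq : a * ell u = - (a * ln q) by rewrite /q ln_sigmoid mulrN opprK.
have sw : (1 - q) * -2 <= sigmoid (- u) * w.
  by rewrite sigmoidN ler_wpM2l // subr_ge0 sigmoid_le1.
lra.
Qed.

Lemma ell_dis_lower (u w : R) : -2 <= u -> w <= 2 ->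
  alpha R * ell u + sigmoid (- u) * w <= alpha R * ln (1 + expR 2) + alpha R.
Proof.
move=> u2 w2; have a0 : 0 < alpha R by apply: lt_trans alpha_gt1.
have : ell u <= ell (-2) := ler_ell u2.
rewrite [ell (-2)]/ell opprK => /(ler_wpM2l (ltW a0)) ell2.
have s2 : sigmoid (- u) <= alpha R / 2 by rewrite alphaE mulrC mulKf // ler_sigmoid // lerNl.
have sw : sigmoid (- u) * w <= sigmoid (- u) * 2 by rewrite ler_wpM2l // ltW ?sigmoid_gt0.
lra.
Qed.

End pointwise_bounds.

Section encoder.
Context {d : measure_display} {X : measurableType d} {R : realType} {dim : nat}.
Implicit Types f : X -> 'rV[R]_dim.

Lemma normr_mul_le_half_sqr (x z : R) : `|x * z| <= (x * x + z * z) / 2.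
Proof.
have sq (r : R) : `|r| * `|r| = r * r by rewrite -normrM ger0_norm // -expr2 sqr_ge0.
have := sqr_ge0 (`|x| - `|z|); rewrite normrM -(sq x) -(sq z) expr2; nra.
Qed.

Lemma normr_dotp_le1 (u v : 'rV[R]_dim) : dotp u u = 1 -> dotp v v = 1 -> `|dotp u v| <= 1.
Proof.
move=> uu vv; apply: le_trans (ler_norm_sum _ _ _) _.
apply: (@le_trans _ _ (\sum_(i < dim) (u ord0 i * u ord0 i + v ord0 i * v ord0 i) / 2)).
  by apply: ler_sum => i _; exact: normr_mul_le_half_sqr.
rewrite -mulr_suml big_split /= -/(dotp u u) -/(dotp v v) uu vv; lra.
Qed.

Lemma encoder_dotpp f x : is_encoder f -> dotp (f x) (f x) = 1.
Proof.
move=> [_ f1]; have dot_ge0 : 0 <= dotp (f x) (f x).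
  by apply: sumr_ge0 => i _; rewrite -expr2 sqr_ge0.
by rewrite -(sqr_sqrtr dot_ge0) f1 expr1n.
Qed.

Definition margin f (x xp xn : X) : R := dotp (f x) (f xp) - dotp (f x) (f xn).

Lemma normr_margin_le2 {f} x xp xn : is_encoder f -> `|margin f x xp xn| <= 2.
Proof.
move=> ef; apply: le_trans (ler_normB _ _) _.
by rewrite lerD // normr_dotp_le1 // encoder_dotpp.
Qed.

Lemma margin_bound {f} x xp xn : is_encoder f -> -2 <= margin f x xp xn <= 2.
Proof. by move=> ef; rewrite -ler_norml normr_margin_le2. Qed.

Lemma bounded_measurable3_margin {f} : is_encoder f -> bounded_measurable3 (margin f).
Proof.
move=> ef; split; last by exists 2 => w; exact: normr_margin_le2.
have [mf _] := ef.
have mdot (p1 p2 : X * X * X -> X) : measurable_fun setT p1 -> measurable_fun setT p2 ->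
    measurable_fun setT (fun w => dotp (f (p1 w)) (f (p2 w))).
  move=> m1 m2; apply: measurable_sum => i.
  by apply: measurable_funM; exact: measurableT_comp (mf i) _.
have m11 : measurable_fun setT (fun w : X * X * X => w.1.1).
  exact: measurableT_comp measurable_fst measurable_fst.
have m12 : measurable_fun setT (fun w : X * X * X => w.1.2).
  exact: measurableT_comp measurable_snd measurable_fst.
by apply: measurable_funB; apply: mdot.
Qed.

End encoder.

Section losses.
Context {d : measure_display} {X : measurableType d} {R : realType} {dim : nat}.
Implicit Types (g h : X -> 'rV[R]_dim) (D : taskdist X R).

Lemma bounded_measurable3_ell {g} : is_encoder g ->
  bounded_measurable3 (fun x xp xn => ell (margin g x xp xn)).
Proof.
move=> eg; have [mg _] := bounded_measurable3_margin eg.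
split; first exact: measurableT_comp measurable_ell mg.
exists (ell (-2)) => w; rewrite ger0_norm ?ell_ge0 // ler_ell //.
by case/andP: (margin_bound w.1.1 w.1.2 w.2 eg).
Qed.

Lemma bounded_measurable3_dis {g h} : is_encoder g -> is_encoder h ->
  bounded_measurable3 (fun x xp xn => sigmoid (- margin h x xp xn) * margin g x xp xn).
Proof.
move=> eg eh; apply: bounded_measurableM (bounded_measurable3_margin eg).
have [mh _] := bounded_measurable3_margin eh.
split; first exact: measurableT_comp measurable_sigmoid (measurable_funN mh).
by exists 1 => w; rewrite ger0_norm ?sigmoid_le1 // ltW ?sigmoid_gt0.
Qed.

Lemma LconE g D : Lcon g D = Esample D (fun x xp xn => ell (margin g x xp xn)).
Proof. by []. Qed.

Lemma LdisE g h D : Ldis g h D =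
  Esample D (fun x xp xn => ell (margin g x xp xn) + sigmoid (- margin h x xp xn) * margin g x xp xn).
Proof.
rewrite /Ldis; congr Esample; apply/funext => x; apply/funext => xp; apply/funext => xn.
by rewrite /= softmax_cross_entropy /margin opprB.
Qed.

Lemma Lcon_ge0 g D : is_encoder g -> 0 <= Lcon g D.
Proof.
move=> eg; rewrite -(Esample_cst D 0); apply: ler_Esample => [||x xp xn].
- exact: bounded_measurable_cst.
- exact: bounded_measurable3_ell.
- exact: ell_ge0.
Qed.

Lemma Ldis_ge0 g h D : is_encoder g -> is_encoder h -> 0 <= Ldis g h D.
Proof.
move=> eg eh; rewrite LdisE -(Esample_cst D 0); apply: ler_Esample => [||x xp xn].
- exact: bounded_measurable_cst.
- exact: bounded_measurableD (bounded_measurable3_ell eg) (bounded_measurable3_dis eg eh).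
- by rewrite ell_dis_ge0 // ltW ?sigmoid_gt0 ?sigmoid_le1.
Qed.

Lemma inf_Lcon_le g D : is_encoder g -> inf_Lcon dim D <= Lcon g D.
Proof.
move=> eg; apply: ge_inf; last by exists g.
by exists 0 => _ [f ef <-]; exact: Lcon_ge0.
Qed.

Lemma Esample_teacher (a c : R) g h D : is_encoder g -> is_encoder h ->
  Esample D (fun x xp xn =>
    a * ell (margin h x xp xn) + sigmoid (- margin h x xp xn) * margin g x xp xn + c) =
  a * Lcon h D + (Ldis g h D - Lcon g D) + c.
Proof.
move=> eg eh; have bS := bounded_measurable3_dis eg eh.
have bA : bounded_measurable3 (fun x xp xn => a * ell (margin h x xp xn)).
  exact: bounded_measurableZ (bounded_measurable3_ell eh).
have bAS : bounded_measurable3 (fun x xp xn =>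
    a * ell (margin h x xp xn) + sigmoid (- margin h x xp xn) * margin g x xp xn).
  exact: bounded_measurableD bA bS.
have bc : bounded_measurable3 (fun _ _ _ : X => c) := bounded_measurable_cst c.
rewrite (EsampleD D bAS bc) Esample_cst (EsampleD D bA bS).
rewrite (EsampleZ D _ (bounded_measurable3_ell eh)) LdisE.
rewrite (EsampleD D (bounded_measurable3_ell eg) bS) -!LconE.
by congr (_ + _ + _); rewrite addrAC subrr add0r.
Qed.

Lemma bounded_measurable3_teacher (a c : R) {g h} : is_encoder g -> is_encoder h ->
  bounded_measurable3 (fun x xp xn =>
    a * ell (margin h x xp xn) + sigmoid (- margin h x xp xn) * margin g x xp xn + c).
Proof.
move=> eg eh; apply: bounded_measurableD (bounded_measurable_cst c).
exact: bounded_measurableD (bounded_measurableZ a (bounded_measurable3_ell eh))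
  (bounded_measurable3_dis eg eh).
Qed.

Lemma Lcon_le_Ldis (a : R) g h D : 0 < a -> is_encoder g -> is_encoder h ->
  Lcon g D <= a * Lcon h D + Ldis g h D + (2 - a + a * ln (a / 2)).
Proof.
move=> a0 eg eh.
have : 0 <= Esample D (fun x xp xn => a * ell (margin h x xp xn)
    + sigmoid (- margin h x xp xn) * margin g x xp xn + (2 - a + a * ln (a / 2))).
  rewrite -(Esample_cst D 0); apply: ler_Esample => [||x xp xn].
  - exact: bounded_measurable_cst.
  - exact: bounded_measurable3_teacher.
  - by apply: ell_dis_upper => //; case/andP: (margin_bound x xp xn eg).
rewrite (Esample_teacher _ _ _ _ D eg eh).
(* [lra] compares its atoms up to conversion, which would unfold the losses:
   they are first abstracted syntactically. *)
by generalize (Lcon g D) (Lcon h D) (Ldis g h D) => *; lra.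
Qed.

Lemma Lcon_ge_Ldis g h D : is_encoder g -> is_encoder h ->
  alpha R * Lcon h D + Ldis g h D - (alpha R * ln (1 + expR 2) + alpha R) <= Lcon g D.
Proof.
move=> eg eh.
have : Esample D (fun x xp xn => alpha R * ell (margin h x xp xn)
    + sigmoid (- margin h x xp xn) * margin g x xp xn
    + - (alpha R * ln (1 + expR 2) + alpha R)) <= 0.
  rewrite -(Esample_cst D 0); apply: ler_Esample => [||x xp xn].
  - exact: bounded_measurable3_teacher.
  - exact: bounded_measurable_cst.
  - rewrite subr_le0; apply: ell_dis_lower.
    + by case/andP: (margin_bound x xp xn eh).
    + by case/andP: (margin_bound x xp xn eg).
rewrite (Esample_teacher _ _ _ _ D eg eh).
by generalize (Lcon g D) (Lcon h D) (Ldis g h D) => *; lra.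
Qed.

End losses.

Section discounted_sum.
Context {R : realFieldType}.
Implicit Types (a c : R) (W Z V S : nat -> R).

Definition discounted_sum a W (T : nat) : R := \sum_(2 <= t < T.+1) a ^+ (T - t) * W t.

Lemma discounted_sumS a W T : (1 <= T)%N ->
  discounted_sum a W T.+1 = a * discounted_sum a W T + W T.+1.
Proof.
move=> T1; rewrite /discounted_sum big_nat_recr //= subnn expr0 mul1r mulr_sumr.
congr (_ + _); apply: eq_big_nat => t /andP[_ tT].
by rewrite subSn // exprS mulrA.
Qed.

Lemma discounted_sum_lin a Z V c T :
  discounted_sum a (fun t => Z t + c * V t) T = discounted_sum a Z T + c * discounted_sum a V T.
Proof.
rewrite /discounted_sum mulr_sumr -big_split; apply: eq_bigr => t _ /=; ring.
Qed.

Lemma discounted_sum_pred a T : a != 1 ->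
  discounted_sum a (fun t => (t.-1)%:R) T = (T%:R - 1 - T%:R * a + a ^+ T) / (1 - a) ^+ 2.
Proof.
move=> a1; have a1' : 1 - a != 0 by rewrite subr_eq0 eq_sym.
elim: T => [|T IH]; first by rewrite /discounted_sum big_geq //; field.
have [->|Tn0] := eqVneq T 0%N; first by rewrite /discounted_sum big_geq //; field.
by rewrite discounted_sumS ?lt0n // IH /= [a ^+ T.+1]exprS -natr1; field.
Qed.

Lemma unroll_le {a S W} {T0 : nat} : 0 <= a ->
  (forall t, (2 <= t <= T0)%N -> S t <= a * S t.-1 + W t) ->
  forall T, (1 <= T <= T0)%N -> S T <= a ^+ (T - 1) * S 1%N + discounted_sum a W T.
Proof.
move=> a0 step; elim=> [//|T IH] /andP[_ TT0].
have [->|Tn0] := eqVneq T 0%N.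
  by rewrite /discounted_sum big_geq // expr0 mul1r addr0.
have T1 : (1 <= T)%N by rewrite lt0n.
apply: le_trans (step T.+1 _) _; first by rewrite ltnS T1.
rewrite discounted_sumS // subn1 /= -(prednK T1) exprS prednK // -subn1.
have := IH ltac:(by rewrite T1 ltnW); move/(ler_wpM2l a0); lra.
Qed.

Lemma unroll_ge {a S W} {T0 : nat} : 0 <= a ->
  (forall t, (2 <= t <= T0)%N -> a * S t.-1 + W t <= S t) ->
  forall T, (1 <= T <= T0)%N -> a ^+ (T - 1) * S 1%N + discounted_sum a W T <= S T.
Proof.
move=> a0 step T TT0.
have stepN t : (2 <= t <= T0)%N -> - S t <= a * - S t.-1 + - W t.
  by move=> tT0; have := step t tT0; lra.
have := unroll_le a0 stepN T TT0.
have -> : discounted_sum a (fun t => - W t) T = - discounted_sum a W T.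
  by rewrite /discounted_sum -sumrN; apply: eq_bigr => t _; rewrite mulrN.
lra.
Qed.

End discounted_sum.

Section gammas.
Context {R : realType}.
Variables (lam : R) (k : nat -> nat -> R) (t : nat).

Lemma gammat_gt0 : (1 <= t)%N -> (forall j, (1 <= j < t)%N -> 0 < lam * k t j) ->
  0 < gammat lam k t.
Proof.
move=> t1 kpos; rewrite /gammat big_seq; apply: lt_bigmin => [|j].
  by rewrite invr_gt0 ltr0n.
by rewrite mem_index_iota; exact: kpos.
Qed.

Lemma gammat_le1 : (1 <= t)%N -> gammat lam k t <= 1.
Proof.
by move=> t1; apply: le_trans (bigmin_le_id _ _ _ _) _; rewrite invf_le1 ?ltr0n ?ler1n.
Qed.

Lemma gammat_le j : (1 <= j < t)%N -> gammat lam k t <= lam * k t j.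
Proof. by move=> jt; apply: ge_bigmin_seq; rewrite ?mem_index_iota. Qed.

Lemma gammat'_ge1 : 1 <= gammat' lam k t.
Proof. exact: bigmax_ge_id. Qed.

Lemma gammat'_ge j : (1 <= j < t)%N -> lam * k t j <= gammat' lam k t.
Proof. by move=> jt; rewrite /gammat'; apply: (le_bigmax_seq _ j) => //; rewrite mem_index_iota. Qed.

End gammas.

Section test_loss_step.
Context {d : measure_display} {X : measurableType d} {R : realType} {dim : nat}.
Variables (D : nat -> taskdist X R) (lam : R) (k : nat -> nat -> R) (t : nat).
Variables (g h : X -> 'rV[R]_dim).
Hypotheses (t1 : (1 <= t)%N) (eg : is_encoder g) (eh : is_encoder h).

Let Ltest_recr : Ltest t g D = \sum_(1 <= j < t) Lcon g (D j) + Lcon g (D t).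
Proof. by rewrite /Ltest big_nat_recr. Qed.

Let Ltest_pred : Ltest t.-1 h D = \sum_(1 <= j < t) Lcon h (D j).
Proof. by rewrite /Ltest prednK. Qed.

Let sum_const (c : R) : c * (t.-1)%:R = \sum_(1 <= j < t) c.
Proof. by rewrite sumr_const_nat subn1 mulr_natr. Qed.

Lemma Ltest_step_le (a gam : R) : 0 < a -> 0 < gam <= 1 ->
  (forall j, (1 <= j < t)%N -> gam <= lam * k t j) ->
  Ltest t g D <= a * Ltest t.-1 h D + (Ltrain lam k t g h (D t) D / gam
    + (1 - gam^-1) * inf_Lcon dim (D t) + (2 - a + a * ln (a / 2)) * (t.-1)%:R).
Proof.
move=> a0 /andP[gam0 gam1] gam_le; rewrite Ltest_recr Ltest_pred /Ltrain /Ldis_prev.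
have cur : Lcon g (D t) <= Lcon g (D t) / gam + (1 - gam^-1) * inf_Lcon dim (D t).
  have ginv1 : 1 <= gam^-1 by rewrite invf_ge1.
  move: (inf_Lcon_le _ (D t) eg); generalize (Lcon g (D t)) (inf_Lcon dim (D t)) => L I; nra.
have prev : \sum_(1 <= j < t) Lcon g (D j) <= a * \sum_(1 <= j < t) Lcon h (D j)
    + \sum_(1 <= j < t) Ldis g h (D j) + (2 - a + a * ln (a / 2)) * (t.-1)%:R.
  rewrite sum_const mulr_sumr -!big_split /=.
  by apply: ler_sum => j _; exact: Lcon_le_Ldis.
have dis : \sum_(1 <= j < t) Ldis g h (D j)
    <= lam * (\sum_(1 <= j < t) k t j * Ldis g h (D j)) / gam.
  rewrite mulr_sumr mulr_suml; apply: ler_sum_nat => j jt.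
  rewrite mulrA mulrAC ler_peMl ?Ldis_ge0 // ler_pdivlMr // mul1r; exact: gam_le.
move: prev dis cur; rewrite mulrDl.
generalize (\sum_(1 <= j < t) Lcon g (D j)) (\sum_(1 <= j < t) Lcon h (D j))
  (\sum_(1 <= j < t) Ldis g h (D j)) (\sum_(1 <= j < t) k t j * Ldis g h (D j))
  (Lcon g (D t)) (inf_Lcon dim (D t)) => *; lra.
Qed.

Lemma Ltest_step_ge (gam : R) : 1 <= gam ->
  (forall j, (1 <= j < t)%N -> lam * k t j <= gam) ->
  alpha R * Ltest t.-1 h D + (Ltrain lam k t g h (D t) D / gam
    + - (alpha R * ln (1 + expR 2) + alpha R) * (t.-1)%:R) <= Ltest t g D.
Proof.
move=> gam1 le_gam; have gam0 : 0 < gam by apply: lt_le_trans gam1.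
rewrite Ltest_recr Ltest_pred /Ltrain /Ldis_prev.
have prev : alpha R * \sum_(1 <= j < t) Lcon h (D j) + \sum_(1 <= j < t) Ldis g h (D j)
    - (alpha R * ln (1 + expR 2) + alpha R) * (t.-1)%:R <= \sum_(1 <= j < t) Lcon g (D j).
  rewrite sum_const mulr_sumr -big_split -sumrB /=.
  by apply: ler_sum => j _; exact: Lcon_ge_Ldis.
have dis : lam * (\sum_(1 <= j < t) k t j * Ldis g h (D j)) / gam
    <= \sum_(1 <= j < t) Ldis g h (D j).
  rewrite mulr_sumr mulr_suml; apply: ler_sum_nat => j jt.
  rewrite mulrA mulrAC ler_piMl ?Ldis_ge0 // ler_pdivrMr // mul1r; exact: le_gam.
have cur : Lcon g (D t) / gam <= Lcon g (D t).
  by rewrite ler_pdivrMr // ler_peMr ?Lcon_ge0.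
move: prev dis cur; rewrite mulrDl.
generalize (\sum_(1 <= j < t) Lcon g (D j)) (\sum_(1 <= j < t) Lcon h (D j))
  (\sum_(1 <= j < t) Ldis g h (D j)) (\sum_(1 <= j < t) k t j * Ldis g h (D j))
  (Lcon g (D t)) => *; lra.
Qed.

End test_loss_step.

Section continual_learning.
Context {d : measure_display} {X : measurableType d} {R : realType} {dim : nat}.
Variables (D : nat -> taskdist X R) (f : nat -> X -> 'rV[R]_dim) (lam : R)
  (k : nat -> nat -> R) (T : nat).
Hypotheses (hf : forall t, (1 <= t <= T)%N -> is_encoder (f t)) (hlam : 0 < lam)
  (hkpos : forall t j, (2 <= t <= T)%N -> (1 <= j < t)%N -> 0 < k t j).

Let encoder_step {t} : (2 <= t <= T)%N -> is_encoder (f t) /\ is_encoder (f t.-1).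
Proof.
case/andP=> t2 tT; split; apply: hf; first by rewrite (ltnW t2).
by rewrite -ltnS prednK ?t2 ?(leq_trans (leq_pred t)) // (ltnW t2).
Qed.

Lemma Ltest_rec_le t : (2 <= t <= T)%N ->
  Ltest t (f t) D <= alpha R * Ltest t.-1 (f t.-1) D +
    (Ltrain lam k t (f t) (f t.-1) (D t) D / gammat lam k t
     + (1 - (gammat lam k t)^-1) * inf_Lcon dim (D t)
     + (2 - alpha R + alpha R * ln (alpha R / 2)) * (t.-1)%:R).
Proof.
move=> ht; have [eft eft1] := encoder_step ht; have t1 : (1 <= t)%N by case/andP: ht => /ltnW.
apply: Ltest_step_le => //; first exact: lt_trans alpha_gt1.
- rewrite gammat_le1 // andbT gammat_gt0 // => j jt.
  by rewrite mulr_gt0 // hkpos.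
- exact: gammat_le.
Qed.

Lemma Ltest_rec_ge t : (2 <= t <= T)%N ->
  alpha R * Ltest t.-1 (f t.-1) D +
    (Ltrain lam k t (f t) (f t.-1) (D t) D / gammat' lam k t
     + - (alpha R * ln (1 + expR 2) + alpha R) * (t.-1)%:R) <= Ltest t (f t) D.
Proof.
move=> ht; have [eft eft1] := encoder_step ht; have t1 : (1 <= t)%N by case/andP: ht => /ltnW.
apply: Ltest_step_ge => //; [exact: gammat'_ge1 | exact: gammat'_ge].
Qed.

End continual_learning.

Theorem theorem1 (R : realType) (d : measure_display) (X : measurableType d)
  (dim : nat) (hdim : (0 < dim)%N)
  (T : nat) (hT : (2 <= T)%N)
  (D : nat -> taskdist X R)
  (f : nat -> X -> 'rV[R]_dim)
  (hf : forall t, (1 <= t <= T)%N -> is_encoder (f t))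
  (lam : R) (hlam : 0 < lam)
  (k : nat -> nat -> R)
  (hkpos : forall t j, (2 <= t <= T)%N -> (1 <= j < t)%N -> 0 < k t j)
  (hksum : forall t, (2 <= t <= T)%N -> \sum_(1 <= j < t) k t j = 1) :
  let a := alpha R in
  let eta :=
    (2 - a + a * ln (a / 2)) * geomfac R T
    + \sum_(2 <= t < T.+1)
        a ^+ (T - t) * (1 - (gammat lam k t)^-1) * inf_Lcon dim (D t) in
  let eta' := - (a * ln (1 + expR 2) + a) * geomfac R T in
  Ltest T (f T) D <=
    a ^+ (T - 1) * Ltrain1 (f 1%N) (D 1%N)
    + \sum_(2 <= t < T.+1)
        a ^+ (T - t) / gammat lam k t * Ltrain lam k t (f t) (f t.-1) (D t) D
    + eta
  /\
  Ltest T (f T) D >=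
    a ^+ (T - 1) * Ltrain1 (f 1%N) (D 1%N)
    + \sum_(2 <= t < T.+1)
        a ^+ (T - t) / gammat' lam k t * Ltrain lam k t (f t) (f t.-1) (D t) D
    + eta'.
Proof.
move=> a eta eta'; rewrite {}/eta {}/eta' {}/a /geomfac.
have a0 : 0 <= alpha R by apply/ltW/(lt_trans ltr01 alpha_gt1).
have a1 : alpha R != 1 by rewrite gt_eqF // alpha_gt1.
have T1 : (1 <= T <= T)%N by rewrite leqnn (ltnW hT).
have L1 : Ltest 1 (f 1%N) D = Ltrain1 (f 1%N) (D 1%N) by rewrite /Ltest big_nat1.
split.
- apply: le_trans (unroll_le a0 (Ltest_rec_le D f lam k T hf hlam hkpos) T T1) _.
  rewrite L1 discounted_sum_lin discounted_sum_pred // -[X in _ <= X]addrA lerD2l.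
  rewrite [X in X <= _]addrC [X in _ <= X]addrCA lerD2l /discounted_sum -big_split /=.
  by apply: ler_sum => t _; rewrite mulrDr !mulrA mulrAC.
- apply: le_trans _ (unroll_ge a0 (Ltest_rec_ge D f lam k T hf) T T1).
  rewrite L1 discounted_sum_lin discounted_sum_pred // addrA lerD2r lerD2l.
  by apply: ler_sum => t _; rewrite mulrA mulrAC.
Qed.
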